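(* Let $f(x)=\sum_{i=1}^s\phi_i({\bm M}_ix)$ for $x\in\mathbb{R}^d$, where ${\bm M}_i\in\mathbb{R}^{q_i\times d}$ and each $\phi_i:\mathbb{R}^{q_i}\to\mathbb{R}$ is continuously differentiable with ${\bm L}_i$-Lipschitz gradient, ${\bm L}_i\in\mathbb{S}^{q_i}_{++}$. If ${\bm L}\in\mathbb{S}^d_{++}$ satisfies $$\sum_{i=1}^s\lambda_{\max}\!\left({\bm L}_i^{1/2}{\bm M}_i{\bm L}^{-1}{\bm M}_i^\top{\bm L}_i^{1/2}\right)=1,$$ then $f$ has ${\bm L}$-Lipschitz gradient.
   Context: $\mathbb{S}^q_{++}$: symmetric positive definite $q\times q$ matrices; $\|x\|_{\bm M}^2:=x^\top{\bm M}x$; $\lambda_{\max}$: largest eigenvalue. A differentiable $g:\mathbb{R}^q\to\mathbb{R}$ has ${\bm L}$-Lipschitz gradient if $\|\nabla g(x)-\nabla g(y)\|_{{\bm L}^{-1}}\le\|x-y\|_{\bm L}$ for all $x,y$. *)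

From HB Require Import structures.
From mathcomp Require Import all_boot all_order all_algebra.
From mathcomp Require Import all_classical all_reals all_analysis.
Set Implicit Arguments. Unset Strict Implicit. Unset Printing Implicit Defensive.
Import Order.TTheory GRing.Theory Num.Theory.
Import numFieldNormedType.Exports.
Local Open Scope ring_scope.
Local Open Scope classical_set_scope.

Section Defs.
Variable R : realType.

Definition qform (n : nat) (A : 'M[R]_n) (x : 'cV[R]_n) : R :=
  ((x^T *m A *m x) 0 0).

Definition mxnorm (n : nat) (A : 'M[R]_n) (x : 'cV[R]_n) : R :=
  Num.sqrt (qform A x).

Definition spd (n : nat) (A : 'M[R]_n) : Prop :=
  A^T = A /\ forall x : 'cV[R]_n, x != 0 -> 0 < qform A x.

Definition is_gradient (q : nat) (phi : 'cV[R]_q -> R) (g : 'cV[R]_q -> 'cV[R]_q)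
  : Prop :=
  forall x, differentiable phi x /\
    ('d phi x : 'cV[R]_q -> R) = (fun v => ((g x)^T *m v) 0 0).

Definition L_lipschitz_gradient (q : nat) (L : 'M[R]_q) (phi : 'cV[R]_q -> R)
  : Prop :=
  exists g : 'cV[R]_q -> 'cV[R]_q, is_gradient phi g /\
    forall x y, mxnorm (invmx L) (g x - g y) <= mxnorm L (x - y).

Definition C1 (q : nat) (phi : 'cV[R]_q -> R) : Prop :=
  exists g : 'cV[R]_q -> 'cV[R]_q, is_gradient phi g /\ continuous g.

(* largest eigenvalue (used for symmetric matrices, whose eigenvalues are real) *)
Definition lambda_max (n : nat) (A : 'M[R]_n) : R :=
  sup [set a : R | eigenvalue A a].

End Defs.

From HB Require Import structures.
From mathcomp Require Import all_boot all_order all_algebra.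
From mathcomp Require Import all_classical all_reals all_analysis.
From mathcomp Require Import ring lra.
Import Order.TTheory GRing.Theory Num.Theory.
Import numFieldNormedType.Exports.

Set Implicit Arguments. Unset Strict Implicit. Unset Printing Implicit Defensive.
Local Open Scope ring_scope.

(* Write [S_i = L_i^(1/2)], [C_i = M_i^T S_i] and [lam_i] for the largest
   eigenvalue of [C_i^T L^-1 C_i].  By the Rayleigh characterisation of
   [lam_i], [|C_i w|_(L^-1)^2 <= lam_i |w|^2], which gives both
   [|M_i^T D|_(L^-1)^2 <= lam_i |D|_(L_i^-1)^2] and, by duality,
   [|M_i u|_(L_i)^2 <= lam_i |u|_L^2].  Chaining these through the Lipschitz
   bound of [grad phi_i] yields
   [|M_i^T (grad phi_i (M_i x) - grad phi_i (M_i y))|_(L^-1) <= lam_i |x - y|_L],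
   and the triangle inequality together with [sum_i lam_i = 1] concludes. *)

Section QuadraticForms.
Variable R : realType.

Definition bil n (A : 'M[R]_n) (x y : 'cV[R]_n) : R := (x^T *m A *m y) 0 0.
Definition dotc n (x y : 'cV[R]_n) : R := (x^T *m y) 0 0.
Definition psd n (A : 'M[R]_n) : Prop := forall x, 0 <= qform A x.

Lemma qformE n (A : 'M[R]_n) x : qform A x = bil A x x. Proof. by []. Qed.

Lemma dotcE n (x y : 'cV[R]_n) : dotc x y = bil 1%:M x y.
Proof. by rewrite /bil mulmx1. Qed.

Lemma bilDl n (A : 'M[R]_n) x y z : bil A (x + y) z = bil A x z + bil A y z.
Proof. by rewrite /bil linearD /= !mulmxDl mxE. Qed.

Lemma bilDr n (A : 'M[R]_n) x y z : bil A z (x + y) = bil A z x + bil A z y.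
Proof. by rewrite /bil !mulmxDr mxE. Qed.

Lemma bilZl n (A : 'M[R]_n) a x z : bil A (a *: x) z = a * bil A x z.
Proof. by rewrite /bil linearZ /= -!scalemxAl mxE. Qed.

Lemma bilZr n (A : 'M[R]_n) a x z : bil A z (a *: x) = a * bil A z x.
Proof. by rewrite /bil -!scalemxAr mxE. Qed.

Lemma bil0l n (A : 'M[R]_n) z : bil A 0 z = 0.
Proof. by rewrite /bil linear0 !mul0mx mxE. Qed.

Lemma bilC n (A : 'M[R]_n) x y : A^T = A -> bil A x y = bil A y x.
Proof.
move=> sA; have trE (B : 'M[R]_1) : B 0 0 = B^T 0 0 by rewrite mxE.
by rewrite /bil trE !trmx_mul trmxK sA mulmxA.
Qed.

Lemma qform_mul m n (B : 'M[R]_m) (C : 'M[R]_(m, n)) w :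
  qform B (C *m w) = qform (C^T *m B *m C) w.
Proof. by rewrite /qform trmx_mul !mulmxA. Qed.

Lemma gram_sym m n (B : 'M[R]_m) (C : 'M[R]_(m, n)) :
  B^T = B -> (C^T *m B *m C)^T = C^T *m B *m C.
Proof. by move=> sB; rewrite !trmx_mul trmxK sB mulmxA. Qed.

Lemma dotc_sqr n (x : 'cV[R]_n) : dotc x x = \sum_i x i 0 ^+ 2.
Proof. by rewrite /dotc mxE; apply: eq_bigr => i _; rewrite mxE expr2. Qed.

Lemma dotc_ge0 n (x : 'cV[R]_n) : 0 <= dotc x x.
Proof. by rewrite dotc_sqr sumr_ge0 // => i _; rewrite sqr_ge0. Qed.

Lemma dotc_eq0 n (x : 'cV[R]_n) : dotc x x = 0 -> x = 0.
Proof.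
rewrite dotc_sqr => /psumr_eq0P x0; apply/matrixP => i j.
rewrite (ord1 j) mxE; apply/eqP; rewrite -sqrf_eq0; apply/eqP.
by apply: x0 => // k _; rewrite sqr_ge0.
Qed.

Lemma dotc_gt0 n (x : 'cV[R]_n) : x != 0 -> 0 < dotc x x.
Proof.
move=> x0; rewrite lt_neqAle dotc_ge0 andbT eq_sym.
by apply: contra x0 => /eqP/dotc_eq0 ->.
Qed.

Lemma qformDZ n (A : 'M[R]_n) x y t : A^T = A ->
  qform A (x + t *: y) = qform A x + 2 * t * bil A x y + t ^+ 2 * qform A y.
Proof.
move=> sA; rewrite !qformE bilDl !bilDr !bilZl !bilZr (bilC x y sA).
by rewrite expr2; ring.
Qed.

Lemma bil_sqr_le n (A : 'M[R]_n) x y : A^T = A -> psd A ->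
  bil A x y ^+ 2 <= qform A x * qform A y.
Proof.
move=> sA pA.
set a := qform A x; set b := bil A x y; set c := qform A y.
have ge0 t : 0 <= a + 2 * t * b + t ^+ 2 * c by rewrite -qformDZ.
have a0 : 0 <= a := pA x; have c0 : 0 <= c := pA y.
have [c_eq0|c_neq0] := eqVneq c 0.
  suff -> : b = 0 by rewrite c_eq0 expr0n mulr0.
  apply/eqP; apply: contraTT (ge0 (- (a + 1) / (2 * b))) => b0.
  rewrite c_eq0 mulr0 addr0 -ltNge.
  have -> : 2 * (- (a + 1) / (2 * b)) * b = - (a + 1) by field.
  lra.
have c_gt0 : 0 < c by rewrite lt_neqAle eq_sym c_neq0.
have := ge0 (- b / c).
have -> : a + 2 * (- b / c) * b + (- b / c) ^+ 2 * c = (a * c - b ^+ 2) / c.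
  by field.
by rewrite pmulr_lge0 ?invr_gt0 // subr_ge0.
Qed.

Lemma mxnorm_ge0 n (A : 'M[R]_n) x : 0 <= mxnorm A x.
Proof. exact: sqrtr_ge0. Qed.

Lemma mxnorm_sqr n (A : 'M[R]_n) x : psd A -> mxnorm A x ^+ 2 = qform A x.
Proof. by move=> pA; rewrite sqr_sqrtr. Qed.

Lemma ler_mxnormD n (A : 'M[R]_n) x y : A^T = A -> psd A ->
  mxnorm A (x + y) <= mxnorm A x + mxnorm A y.
Proof.
move=> sA pA.
have bxy : bil A x y <= mxnorm A x * mxnorm A y.
  rewrite -sqrtrM //; apply: le_trans (ler_norm _) _.
  by rewrite -sqrtr_sqr ler_sqrt ?mulr_ge0 //; exact: bil_sqr_le.
rewrite -(ler_pXn2r (_ : 0 < 2)%N) ?nnegrE ?addr_ge0 ?mxnorm_ge0 //.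
rewrite mxnorm_sqr // -[y]scale1r qformDZ // scale1r expr1n !mul1r.
rewrite -!mxnorm_sqr // sqrrD mulr2n; nra.
Qed.

Lemma ler_mxnorm_sum n (A : 'M[R]_n) (I : finType) (v : I -> 'cV[R]_n) :
  A^T = A -> psd A -> mxnorm A (\sum_i v i) <= \sum_i mxnorm A (v i).
Proof.
move=> sA pA; elim/big_rec2: _ => [|i y1 y2 _ IH].
  by rewrite /mxnorm qformE bil0l sqrtr0.
by apply: le_trans (ler_mxnormD _ _ sA pA) _; rewrite lerD2l.
Qed.

Lemma spd_psd n (A : 'M[R]_n) : spd A -> psd A.
Proof.
move=> [_ pA] x; have [->|x0] := eqVneq x 0; first by rewrite qformE bil0l.
exact/ltW/pA.
Qed.

Lemma spd_unit n (A : 'M[R]_n) : spd A -> A \in unitmx.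
Proof.
move=> [sA pA]; rewrite unitmxE unitfE; apply/negP => /det0P [v v0 vA0].
have vT0 : v^T != 0 by rewrite -trmx0 (inj_eq trmx_inj).
have := pA _ vT0; rewrite /qform -mulmxA -{1}sA -trmx_mul vA0.
by rewrite linear0 mulmx0 mxE ltxx.
Qed.

Lemma spd_inv n (A : 'M[R]_n) : spd A -> spd (invmx A).
Proof.
move=> hA; have uA := spd_unit hA; case: hA => sA pA.
split; first by rewrite trmx_inv sA.
move=> x x0; have xE : x = A *m (invmx A *m x) by rewrite mulKVmx.
rewrite xE qform_mul sA -!mulmxA mulVmx // mulmx1.
by apply: pA; apply: contra x0; rewrite {2}xE => /eqP ->; rewrite mulmx0.
Qed.

End QuadraticForms.

Section Rayleigh.
Variable R : realType.
Local Open Scope classical_set_scope.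

Lemma rquad_continuous n (B : 'M[R]_n) :
  continuous (fun r : 'rV[R]_n => (r *m B *m r^T) 0 0).
Proof.
have -> : (fun r : 'rV[R]_n => (r *m B *m r^T) 0 0) =
    (fun r => \sum_j (\sum_i r 0 i * B i j) * r 0 j).
  by apply/funext => r; rewrite mxE; apply: eq_bigr => j _; rewrite !mxE.
apply: continuous_big => [|j _ r]; first exact: add_continuous.
apply: continuousM; last exact: coord_continuous.
move: r; apply: continuous_big => [|i _ r]; first exact: add_continuous.
by apply: continuousM; [exact: coord_continuous | exact: cst_continuous].
Qed.

Definition unit_sphere n : set 'rV[R]_n := [set r | (r *m r^T) 0 0 = 1].
Arguments unit_sphere : clear implicits.

Lemma unit_sphere_compact n : compact (unit_sphere n).
Proof.
apply: bounded_closed_compact.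
  exists 1; split => // e e1 r /= r1; apply: le_trans (ltW e1).
  rewrite /Num.norm /= mx_normrE; apply: bigmax_le => //= -[i j] _ /=.
  rewrite (ord1 i).
  have : r 0 j ^+ 2 <= 1.
    rewrite -r1 mxE (bigD1 j) //= mxE -expr2 lerDl.
    by apply: sumr_ge0 => k _; rewrite mxE -expr2 sqr_ge0.
  rewrite -real_normK ?num_real //; have := normr_ge0 (r 0 j); nra.
have -> : unit_sphere n = (fun r => (r *m 1%:M *m r^T) 0 0) @^-1` [set 1].
  by apply/funext => r; rewrite /unit_sphere /preimage /= mulmx1.
apply: preimage_closed; last exact: closed_eq.
by move=> r _; exact: rquad_continuous.
Qed.

Lemma qform_max_sphere n (A : 'M[R]_n.+1) :
  exists x : 'cV[R]_n.+1,
    dotc x x = 1 /\ forall v, qform A v <= qform A x * dotc v v.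
Proof.
pose f (r : 'rV[R]_n.+1) : R := (r *m A *m r^T) 0 0.
have S0 : unit_sphere n.+1 !=set0.
  by exists (delta_mx 0 0); rewrite /unit_sphere /= trmx_delta mul_delta_mx mxE.
have cf : {within unit_sphere n.+1, continuous f}.
  by apply: continuous_subspaceT; exact: rquad_continuous.
have [c c1 cmax] := EVT_max_rV S0 (@unit_sphere_compact n.+1) cf.
have fE v : f v^T = qform A v by rewrite /f /qform trmxK.
exists c^T; split; first by move: c1; rewrite inE /dotc trmxK.
move=> v; have [->|v0] := eqVneq v 0.
  by rewrite qformE bil0l dotcE bil0l mulr0.
have d0 := dotc_gt0 v0; set k := (Num.sqrt (dotc v v))^-1.
have k2 : k ^+ 2 * dotc v v = 1.
  by rewrite /k exprVn sqr_sqrtr ?ltW // mulVf ?gt_eqF.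
have /cmax : (k *: v)^T \in unit_sphere n.+1.
  rewrite inE /unit_sphere /= trmxK; change (dotc (k *: v) (k *: v) = 1).
  by rewrite !dotcE bilZl bilZr -dotcE mulrA -expr2.
have fc : f c = qform A c^T by rewrite -fE trmxK.
rewrite fE fc qformE bilZl bilZr mulrA -expr2 -qformE => kv.
by have := ler_wpM2r (ltW d0) kv; rewrite mulrAC k2 mul1r.
Qed.

Lemma psd_qform_eq0 n (A : 'M[R]_n) x :
  A^T = A -> psd A -> qform A x = 0 -> A *m x = 0.
Proof.
move=> sA pA qx0; apply: dotc_eq0; apply/eqP.
have -> : dotc (A *m x) (A *m x) = bil A x (A *m x).
  by rewrite /bil /dotc trmx_mul sA mulmxA.
rewrite -sqrf_eq0 eq_le sqr_ge0 andbT.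
by rewrite -(mulr0 (qform A (A *m x))) -qx0 mulrC; exact: bil_sqr_le.
Qed.

(* [mu%:M - A] is positive semidefinite and its form vanishes at the
   maximiser [x] of the Rayleigh quotient, so it kills [x]. *)
Lemma rayleigh_eigen n (A : 'M[R]_n.+1) : A^T = A ->
  exists x : 'cV[R]_n.+1, [/\ dotc x x = 1,
    forall v, qform A v <= qform A x * dotc v v & A *m x = qform A x *: x].
Proof.
move=> sA; have [x [x1 xmax]] := qform_max_sphere A.
exists x; split => //; set mu := qform A x.
set B := mu%:M - A.
have qB v : qform B v = mu * dotc v v - qform A v.
  by rewrite /qform /dotc /B mulmxBr mulmxBl mul_mx_scalar -scalemxAl !mxE.
have sB : B^T = B by rewrite /B linearB /= tr_scalar_mx sA.
have pB : psd B by move=> v; rewrite qB subr_ge0.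
have /psd_qform_eq0 : qform B x = 0 by rewrite qB x1 mulr1 subrr.
move=> /(_ sB pB) Bx0.
by apply/eqP; rewrite eq_sym -subr_eq0 -mul_scalar_mx -mulmxBl -/B Bx0.
Qed.

Lemma lambda_max_rayleigh n (A : 'M[R]_n.+1) : A^T = A ->
  exists x : 'cV[R]_n.+1,
    lambda_max A = qform A x /\ forall v, qform A v <= qform A x * dotc v v.
Proof.
move=> sA; have [x [x1 xmax xeig]] := rayleigh_eigen sA.
exists x; split => //; set mu := qform A x in xmax xeig *.
have eig : eigenvalue A mu.
  apply/eigenvalueP; exists x^T; first by rewrite -{1}sA -trmx_mul xeig linearZ.
  apply/negP => /eqP xT0; move: x1.
  by rewrite -[x]trmxK xT0 trmx0 dotcE bil0l => /eqP; rewrite eq_sym oner_eq0.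
have ub : ubound [set a | eigenvalue A a] mu.
  move=> a /eigenvalueP [v vA v0].
  have vT0 : v^T != 0 by rewrite -trmx0 (inj_eq trmx_inj).
  have qv : qform A v^T = a * dotc v^T v^T.
    by rewrite /qform -mulmxA -{1}sA -trmx_mul vA linearZ /= -scalemxAr mxE.
  by have := xmax v^T; rewrite qv ler_pM2r //; exact: dotc_gt0.
apply/eqP; rewrite eq_le; apply/andP; split.
  by apply: ge_sup => //; exists mu.
by apply: ub_le_sup => //; exists mu.
Qed.

Lemma lambda_max_ub n (A : 'M[R]_n) v :
  A^T = A -> qform A v <= lambda_max A * dotc v v.
Proof.
case: n A v => [|n] A v sA.
  by rewrite (flatmx0 v) qformE bil0l dotcE bil0l mulr0.
by have [x [-> xmax]] := lambda_max_rayleigh sA.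
Qed.

Lemma lambda_max_ge0 n (A : 'M[R]_n) : A^T = A -> psd A -> 0 <= lambda_max A.
Proof.
case: n A => [|n] A sA pA; last by have [x [-> _]] := lambda_max_rayleigh sA.
rewrite /lambda_max (_ : [set a | eigenvalue A a] = set0) ?sup0 //.
by apply/seteqP; split => a //= /eigenvalueP [v _]; rewrite (thinmx0 v) eqxx.
Qed.

End Rayleigh.

Section CompositionBound.
Variable R : realType.

Lemma qform_sqrt n (S : 'M[R]_n) x :
  S^T = S -> qform (S *m S) x = dotc (S *m x) (S *m x).
Proof. by move=> sS; rewrite dotcE -qformE qform_mul mulmx1 sS. Qed.

Lemma qform_inv_sqrt n (S : 'M[R]_n) v : S^T = S -> S \in unitmx ->
  qform (invmx (S *m S)) (S *m v) = dotc v v.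
Proof.
move=> sS uS; have uSS : S *m S \in unitmx by rewrite unitmx_mul uS.
rewrite qform_mul sS -{1}(mulKmx uS S) -(mulmxA (invmx S)) mulmxV // mulmx1.
by rewrite mulVmx // dotcE.
Qed.

(* Duality between [C] and [C^T]: apply Cauchy-Schwarz for the [B^-1]-form to
   [<C w, B u> = |C^T u|^2] with [w = C^T u]. *)
Lemma adjoint_qform_bound d q (B : 'M[R]_d) (C : 'M[R]_(d, q)) (lam : R) :
  spd B -> 0 <= lam ->
  (forall w, qform (invmx B) (C *m w) <= lam * dotc w w) ->
  forall u, dotc (C^T *m u) (C^T *m u) <= lam * qform B u.
Proof.
move=> hB lam0 hC u; set w := C^T *m u.
have [sB _] := hB; have uB := spd_unit hB.
have [sB' _] := spd_inv hB; have pB' := spd_psd (spd_inv hB).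
have ww : dotc w w = bil (invmx B) (C *m w) (B *m u).
  rewrite /bil mulmxA -[_ *m invmx B *m B]mulmxA mulVmx // mulmx1.
  by rewrite trmx_mul -mulmxA.
have qBu : qform (invmx B) (B *m u) = qform B u.
  by rewrite qform_mul sB mulmxV // mul1mx.
have := bil_sqr_le (C *m w) (B *m u) sB' pB'; rewrite -ww qBu => cs.
have wQ : dotc w w ^+ 2 <= lam * dotc w w * qform B u.
  by apply: le_trans cs _; rewrite ler_wpM2r // (spd_psd hB).
have [w0|w_neq0] := eqVneq (dotc w w) 0.
  by rewrite w0 mulr_ge0 // (spd_psd hB).
have w_gt0 : 0 < dotc w w by rewrite lt_neqAle eq_sym w_neq0 dotc_ge0.
by rewrite expr2 mulrAC ler_pM2r in wQ.
Qed.

Lemma lipschitz_gradient_mulmx_bound q d (S : 'M[R]_q) (M : 'M[R]_(q, d))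
    (L : 'M[R]_d) (D : 'cV[R]_q) (u : 'cV[R]_d) :
  spd S -> spd L -> mxnorm (invmx (S *m S)) D <= mxnorm (S *m S) (M *m u) ->
  mxnorm (invmx L) (M^T *m D) <=
    lambda_max (S *m M *m invmx L *m M^T *m S) * mxnorm L u.
Proof.
move=> hS hL hD.
have [sS _] := hS; have uS := spd_unit hS.
have [sL' _] := spd_inv hL; have pL' := spd_psd (spd_inv hL).
set C := M^T *m S; set lam := lambda_max _.
have CT : C^T = S *m M by rewrite trmx_mul trmxK sS.
have lamE : lam = lambda_max (C^T *m invmx L *m C) by rewrite CT !mulmxA.
have sA := gram_sym C sL'.
have hC w : qform (invmx L) (C *m w) <= lam * dotc w w.
  by rewrite lamE qform_mul; exact: lambda_max_ub.
have lam0 : 0 <= lam.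
  by rewrite lamE; apply: lambda_max_ge0 => // w; rewrite -qform_mul.
have h1 : qform (invmx L) (M^T *m D) <= lam * qform (invmx (S *m S)) D.
  have DE : D = S *m (invmx S *m D) by rewrite mulKVmx.
  by rewrite DE qform_inv_sqrt // mulmxA; exact: hC.
have h2 : qform (S *m S) (M *m u) <= lam * qform L u.
  by rewrite qform_sqrt // mulmxA -CT; exact: adjoint_qform_bound.
have hD2 : qform (invmx (S *m S)) D <= qform (S *m S) (M *m u).
  have q0 : 0 <= qform (S *m S) (M *m u) by rewrite qform_sqrt // dotc_ge0.
  by move: hD; rewrite /mxnorm ler_sqrt.
rewrite /mxnorm -(ger0_norm lam0) -sqrtr_sqr -sqrtrM ?sqr_ge0 //.
rewrite ler_sqrt ?mulr_ge0 ?sqr_ge0 ?(spd_psd hL) //.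
apply: le_trans h1 _; rewrite expr2 -mulrA ler_wpM2l //.
exact: le_trans hD2 h2.
Qed.

End CompositionBound.

Section Gradients.
Variable R : realType.

Lemma mx_entry_le_norm m n (x : 'M[R]_(m, n)) i j : `|x i j| <= `|x|.
Proof.
rewrite /Num.norm /= mx_normrE.
exact: (le_bigmax _ (fun ij : 'I_m * 'I_n => `|x ij.1 ij.2|) (i, j)).
Qed.

Lemma mulmx_continuous q d (M : 'M[R]_(q, d)) :
  continuous (mulmx M : 'cV[R]_d -> 'cV[R]_q).
Proof.
apply: bounded_linear_continuous; apply/bounded_funP => r.
have K0 : 0 <= \sum_i \sum_j `|M i j|.
  by apply/sumr_ge0 => i _; apply/sumr_ge0.
exists ((\sum_i \sum_j `|M i j|) * r) => x xr.
have r0 : 0 <= r := le_trans (normr_ge0 x) xr.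
rewrite /Num.norm /= mx_normrE; apply: bigmax_le => [|[i k] _ /=].
  exact: mulr_ge0.
rewrite mxE (le_trans (ler_norm_sum _ _ _)) // mulr_suml.
apply: (@le_trans _ _ (\sum_j `|M i j| * r)).
  apply: ler_sum => j _; rewrite normrM ler_wpM2l //.
  exact: le_trans (mx_entry_le_norm _ _ _) xr.
rewrite -mulr_suml (bigD1 i) //= lerDl.
apply/sumr_ge0 => i' _; apply: mulr_ge0 => //.
by apply/sumr_ge0 => j _; exact: normr_ge0.
Qed.

Lemma is_gradient_mulmx q d (M : 'M[R]_(q, d)) phi g :
  is_gradient phi g ->
  is_gradient (fun x => phi (M *m x)) (fun x => M^T *m g (M *m x)).
Proof.
move=> hg x; have [dphi ephi] := hg (M *m x).
have cM := @mulmx_continuous q d M.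
have dM : differentiable (mulmx M : 'cV[R]_d -> 'cV[R]_q) x.
  exact: linear_differentiable.
split; first exact: differentiable_comp.
rewrite diff_comp // diff_lin // ephi; apply/funext => v /=.
by rewrite trmx_mul trmxK mulmxA.
Qed.

Lemma is_gradient_sum d n (F : 'I_n -> 'cV[R]_d -> R)
    (G : 'I_n -> 'cV[R]_d -> 'cV[R]_d) :
  (forall i, is_gradient (F i) (G i)) ->
  is_gradient (fun x => \sum_i F i x) (fun x => \sum_i G i x).
Proof.
move=> hFG x.
have -> : (fun x => \sum_i F i x) = \sum_i F i by apply/funext => y; rewrite fct_sumE.
have [dF ->] : differentiable (\sum_i F i) x /\
    ('d (\sum_i F i) x : 'cV[R]_d -> R) = \sum_i (fun v => ((G i x)^T *m v) 0 0).
  apply: (big_ind2 (fun f df => differentiable f x /\ ('d f x : _ -> R) = df)).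
  - by split; [exact: differentiable_cst | exact: diff_cst].
  - move=> f1 df1 f2 df2 [d1 e1] [d2 e2].
    by split; [exact: differentiableD | rewrite diffD // e1 e2].
  - by move=> i _; exact: hFG.
split => //; apply/funext => v.
by rewrite fct_sumE linear_sum mulmx_suml summxE.
Qed.

End Gradients.

Theorem mainTheorem8 (R : realType) (d s : nat) (q : 'I_s -> nat)
  (M : forall i : 'I_s, 'M[R]_(q i, d))
  (phi : forall i : 'I_s, 'cV[R]_(q i) -> R)
  (Li : forall i : 'I_s, 'M[R]_(q i))
  (Lsqrt : forall i : 'I_s, 'M[R]_(q i))
  (L : 'M[R]_d) :
  (forall i, spd (Li i)) ->
  (forall i, C1 (phi i)) ->
  (forall i, L_lipschitz_gradient (Li i) (phi i)) ->
  (forall i, spd (Lsqrt i) /\ Lsqrt i *m Lsqrt i = Li i) ->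
  spd L ->
  \sum_(i < s) lambda_max (Lsqrt i *m M i *m invmx L *m (M i)^T *m Lsqrt i) = 1 ->
  L_lipschitz_gradient L (fun x : 'cV[R]_d => \sum_(i < s) phi i (M i *m x)).
Proof.
move=> _ _ hLip hS hL hsum.
pose g i := sval (cid (hLip i)).
have hg i : is_gradient (phi i) (g i) /\ forall x y,
    mxnorm (invmx (Li i)) (g i x - g i y) <= mxnorm (Li i) (x - y).
  exact: svalP (cid (hLip i)).
exists (fun x => \sum_i (M i)^T *m g i (M i *m x)); split.
  by apply: is_gradient_sum => i; apply: is_gradient_mulmx; case: (hg i).
move=> x y; rewrite -sumrB; under eq_bigr do rewrite -mulmxBr.
have [sL' _] := spd_inv hL.
apply: le_trans (ler_mxnorm_sum _ sL' (spd_psd (spd_inv hL))) _.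
rewrite -[mxnorm L _]mul1r -hsum mulr_suml; apply: ler_sum => i _.
have [hSi SLi] := hS i.
apply: lipschitz_gradient_mulmx_bound => //.
by rewrite SLi mulmxBr; case: (hg i).
Qed.
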